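(* For every integer $r\ge0$, $$ \begin{aligned} \sum_{n=1}^\infty\frac{(-1)^{n-1}}{n}\int_0^{\frac\pi 2}\theta^r\cos(n\theta)\,d\theta &=\sum_{k=0}^{\lfloor \frac{r}{2}\rfloor }(-1)^k(2k)!\binom{r}{2k}\left(\frac\pi2\right)^{r-2k}\beta(2k+2) \\ &\quad+\sum_{k=1}^{\lceil \frac{r}2\rceil}\frac{(-1)^{k-1}(2k-1)!}{2^{2k+1}}\binom{r}{2k-1}\left(\frac\pi2\right)^{r-2k+1}\zeta_E(2k+1) \\ &\quad-r!\sin\left(\frac{r\pi}{2}\right)\zeta_E(r+2). \end{aligned} $$
   Context: $\zeta_E(s)=\sum_{n=1}^\infty\frac{(-1)^{n+1}}{n^s}$, $\beta(s)=\sum_{n=0}^\infty\frac{(-1)^n}{(2n+1)^s}$; $\lfloor\cdot\rfloor,\lceil\cdot\rceil$ are floor and ceiling; empty sums are $0$. *)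

From Stdlib Require Import Reals.
From Coquelicot Require Import Coquelicot.
Open Scope R_scope.

(* Dirichlet eta function: zeta_E(s) = sum_{n>=1} (-1)^(n+1) / n^s  (index shifted: n -> n+1). *)
Definition zetaE (s : R) : R :=
  Series (fun n : nat => (-1) ^ n / Rpower (INR n + 1) s).

Definition dbeta (s : R) : R :=
  Series (fun n : nat => (-1) ^ n / Rpower (2 * INR n + 1) s).

From Stdlib Require Import Reals Arith Lia Lra.
From Coquelicot Require Import Coquelicot.
Open Scope R_scope.

(** Integrating by parts [r + 1] times,
    [∫_0^{π/2} t^r cos(a t) dt = Σ_{j ≤ r} r!/(r-j)! (π/2)^{r-j} sin((a+j)π/2) / a^{j+1}
                                 - r! sin(rπ/2) / a^{r+1}].
    For [a = n + 1] the factor [sin((n+1+j)π/2)] vanishes unless [n + j] is even.  Hence,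
    after multiplying by [(-1)^n / (n+1)] and summing over [n], the [j]-th term contributes
    [(-1)^k β(2k+2)] when [j = 2k] (only odd denominators [n + 1] survive) and
    [(-1)^k ζ_E(2k+3) / 2^{2k+3}] when [j = 2k+1] (only even ones, [n + 1 = 2(m+1)]), while the
    boundary term gives [-r! sin(rπ/2) ζ_E(r+2)].  Writing [r!/(r-j)! = j! C(r,j)] and
    splitting [j] by parity yields the two finite sums. *)

(* Coquelicot states these in its generic structures ([mult], [scal], carrier
   [AbelianMonoid.sort]); the instances at [R] are what [rewrite], [apply],
   [ring] and [field] can use on plain real expressions. *)
Lemma sum_n_m_ext_R (f g : nat -> R) (n m : nat) :
  (forall k, (n <= k <= m)%nat -> f k = g k) -> sum_n_m f n m = sum_n_m g n m.
Proof. apply sum_n_m_ext_loc. Qed.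

Lemma sum_n_m_Rmult_l (c : R) (f : nat -> R) (n m : nat) :
  sum_n_m (fun k => c * f k) n m = c * sum_n_m f n m.
Proof. apply (@sum_n_m_mult_l R_Ring). Qed.

Lemma is_series_Rmult_l (c : R) (a : nat -> R) (l : R) :
  is_series a l -> is_series (fun n => c * a n) (c * l).
Proof. apply (is_series_scal_l c a l). Qed.

Lemma is_series_sum_n (g : nat -> nat -> R) (l : nat -> R) (r : nat) :
  (forall j, is_series (g j) (l j)) ->
  is_series (fun n => sum_n (fun j => g j n) r) (sum_n l r).
Proof.
  intros Hg. induction r as [|r IH].
  - rewrite sum_O. apply (is_series_ext (g 0%nat)); [intros n; symmetry; apply sum_O | apply Hg].
  - rewrite sum_Sn.
    apply (is_series_ext (fun n => plus (sum_n (fun j => g j n) r) (g (S r) n))).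
    { intros n. symmetry. apply sum_Sn. }
    apply (is_series_plus (fun n => sum_n (fun j => g j n) r) (g (S r))); [exact IH | apply Hg].
Qed.

Lemma is_series_telescope (u : nat -> R) (l : R) :
  is_lim_seq u l -> is_series (fun n => u n - u (S n)) (u O - l).
Proof.
  intros Hu.
  assert (Hsum : forall N, sum_n (fun n => u n - u (S n)) N = u O - u (S N) :> R).
  { induction N as [|N IH]; [apply sum_O|].
    rewrite sum_Sn, IH. change (plus ?x ?y) with (x + y). ring. }
  change (is_lim_seq (sum_n (fun n => u n - u (S n))) (u O - l)).
  apply (is_lim_seq_ext (fun N => u O - u (S N))); [intros N; symmetry; apply Hsum|].
  apply (is_lim_seq_minus _ _ (u O) l); [apply is_lim_seq_const| |reflexivity].
  apply -> is_lim_seq_incr_1. exact Hu.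
Qed.

Lemma ex_series_inv_sq : ex_series (fun n => / (INR n + 1) ^ 2).
Proof.
  apply (@ex_series_le R_AbsRing R_CompleteNormedModule _
           (fun n => 2 * (/ (INR n + 1) - / (INR (S n) + 1)))).
  - intros n. rewrite S_INR. pose proof (pos_INR n).
    change norm with Rabs. rewrite Rabs_pos_eq by (apply Rlt_le, Rinv_0_lt_compat; nra).
    apply (Rmult_le_reg_l ((INR n + 1) ^ 2 * (INR n + 1 + 1))); [nra|].
    field_simplify; lra.
  - eexists. apply is_series_Rmult_l.
    apply (is_series_telescope (fun n => / (INR n + 1)) 0).
    replace (Finite 0) with (Rbar_inv p_infty) by reflexivity.
    apply is_lim_seq_inv; [|discriminate].
    eapply is_lim_seq_plus; [apply is_lim_seq_INR | apply is_lim_seq_const | reflexivity].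
Qed.

Lemma ex_series_div_pow (c x : nat -> R) (p : nat) :
  (2 <= p)%nat -> (forall n, Rabs (c n) <= 1) -> (forall n, INR n + 1 <= x n) ->
  ex_series (fun n => c n / x n ^ p).
Proof.
  intros Hp Hc Hx.
  apply (@ex_series_le R_AbsRing R_CompleteNormedModule _ (fun n => / (INR n + 1) ^ 2));
    [|exact ex_series_inv_sq].
  intros n. change norm with Rabs. pose proof (pos_INR n) as Hn. specialize (Hx n).
  assert (Hpow : (INR n + 1) ^ 2 <= x n ^ p).
  { apply Rle_trans with (x n ^ 2); [apply pow_incr; lra | apply Rle_pow; [lra | exact Hp]]. }
  unfold Rdiv. rewrite Rabs_mult, Rabs_inv, (Rabs_pos_eq (x n ^ p)) by (apply pow_le; lra).
  apply Rle_trans with (1 * / x n ^ p).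
  - apply Rmult_le_compat_r; [apply Rlt_le, Rinv_0_lt_compat, pow_lt; lra | apply Hc].
  - rewrite Rmult_1_l. apply Rinv_le_contravar; [apply pow_lt; lra | exact Hpow].
Qed.

Lemma is_series_alt_div_pow (x : nat -> R) (p : nat) :
  (2 <= p)%nat -> (forall n, INR n + 1 <= x n) ->
  is_series (fun n => (-1) ^ n / x n ^ p) (Series (fun n => (-1) ^ n / Rpower (x n) (INR p))).
Proof.
  intros Hp Hx.
  assert (Hpow : forall n, (-1) ^ n / Rpower (x n) (INR p) = (-1) ^ n / x n ^ p).
  { intros n. rewrite Rpower_pow; [reflexivity|].
    pose proof (pos_INR n). specialize (Hx n). lra. }
  rewrite (Series_ext _ _ Hpow).
  apply Series_correct, ex_series_div_pow; [exact Hp | | exact Hx].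
  intros n. rewrite pow_1_abs. lra.
Qed.

Lemma is_series_zetaE (p : nat) : (2 <= p)%nat ->
  is_series (fun n => (-1) ^ n / (INR n + 1) ^ p) (zetaE (INR p)).
Proof. intros Hp. apply is_series_alt_div_pow; [exact Hp | intros n; lra]. Qed.

Lemma is_series_dbeta (p : nat) : (2 <= p)%nat ->
  is_series (fun n => (-1) ^ n / (2 * INR n + 1) ^ p) (dbeta (INR p)).
Proof.
  intros Hp. apply is_series_alt_div_pow; [exact Hp|]. intros n. pose proof (pos_INR n). lra.
Qed.

Lemma is_series_even_spread (a b : nat -> R) (l : R) :
  (forall p, b (2 * p)%nat = a p) -> (forall p, b (2 * p + 1)%nat = 0) ->
  is_series a l -> is_series b l.
Proof.
  intros Heven Hodd Ha.
  assert (Hsum : forall p, sum_n b (2 * p) = sum_n a p /\ sum_n b (2 * p + 1) = sum_n a p).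
  { induction p as [|p [_ IH]].
    - specialize (Heven 0%nat). specialize (Hodd 0%nat). cbn [Nat.mul Nat.add] in *.
      rewrite sum_Sn, !sum_O, Heven, Hodd. split; [reflexivity | apply Rplus_0_r].
    - assert (Hev : sum_n b (2 * S p) = sum_n a (S p)).
      { replace (2 * S p)%nat with (S (2 * p + 1)) by lia.
        rewrite !sum_Sn, IH. replace (S (2 * p + 1)) with (2 * S p)%nat by lia.
        rewrite Heven. reflexivity. }
      split; [exact Hev|].
      replace (2 * S p + 1)%nat with (S (2 * S p)) by lia.
      rewrite sum_Sn, Hev. replace (S (2 * S p)) with (2 * S p + 1)%nat by lia.
      rewrite Hodd. apply Rplus_0_r. }
  assert (Hdiv2 : forall N, sum_n b N = sum_n a (Nat.div2 N)).
  { intros N. rewrite (Nat.div2_odd N) at 1.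
    destruct (Nat.odd N); cbn [Nat.b2n]; [|rewrite Nat.add_0_r]; apply Hsum. }
  change (is_lim_seq (sum_n b) l).
  apply (is_lim_seq_ext (fun N => sum_n a (Nat.div2 N))); [intros N; symmetry; apply Hdiv2|].
  apply (is_lim_seq_subseq (sum_n a) l Nat.div2); [|exact Ha].
  intros P [N HN]. exists (2 * N)%nat. intros n Hn. apply HN.
  pose proof (Nat.div2_odd n). destruct (Nat.odd n); cbn [Nat.b2n] in *; lia.
Qed.

Lemma is_series_odd_spread (a b : nat -> R) (l : R) :
  (forall p, b (2 * p)%nat = 0) -> (forall p, b (2 * p + 1)%nat = a p) ->
  is_series a l -> is_series b l.
Proof.
  intros Heven Hodd Ha. apply is_series_decr_1.
  rewrite (Heven 0%nat : b 0%nat = 0).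
  change (plus l (opp 0)) with (l - 0). rewrite Rminus_0_r.
  apply (is_series_even_spread a); [| |exact Ha].
  - intros p. rewrite <- Hodd. f_equal. lia.
  - intros p. replace (S (2 * p + 1)) with (2 * S p)%nat by lia. apply Heven.
Qed.

Lemma double_div_2 (q : nat) : ((2 * q) / 2 = q)%nat.
Proof. rewrite Nat.mul_comm. apply Nat.div_mul. lia. Qed.

Lemma double_succ_div_2 (q : nat) : ((2 * q + 1) / 2 = q)%nat.
Proof. symmetry. apply (Nat.div_unique _ 2 q 1); lia. Qed.

Lemma sum_n_parity_split (f : nat -> R) (r : nat) :
  sum_n f r = sum_n_m (fun k => f (2 * k)%nat) 0 (r / 2)
            + sum_n_m (fun k => f (2 * k - 1)%nat) 1 ((r + 1) / 2).
Proof.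
  set (E := fun q => sum_n_m (fun k => f (2 * k)%nat) 0 q : R).
  set (O := fun q => sum_n_m (fun k => f (2 * k - 1)%nat) 1 q : R).
  assert (Hq : forall q, sum_n f (2 * q) = E q + O q :> R
                        /\ sum_n f (2 * q + 1) = E q + O (S q) :> R).
  { induction q as [|q [_ IH]]; unfold E, O in *.
    - rewrite (sum_n_m_zero _ 1 0), !sum_n_n by lia. cbn [Nat.mul Nat.add Nat.sub].
      rewrite sum_Sn, sum_O. split; [symmetry; apply Rplus_0_r | reflexivity].
    - assert (Hev : sum_n f (2 * S q) = E (S q) + O (S q) :> R).
      { replace (2 * S q)%nat with (S (2 * q + 1)) by lia.
        rewrite sum_Sn, IH. unfold E, O. rewrite (sum_n_Sm _ 0 q) by lia.
        replace (2 * S q)%nat with (S (2 * q + 1)) by lia.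
        repeat change (plus ?x ?y) with (x + y). ring. }
      split; [exact Hev|].
      replace (2 * S q + 1)%nat with (S (2 * S q)) by lia.
      rewrite sum_Sn, Hev. unfold E, O. rewrite (sum_n_Sm _ 1 (S q)) by lia.
      replace (2 * S (S q) - 1)%nat with (S (2 * S q)) by lia.
      repeat change (plus ?x ?y) with (x + y). ring. }
  destruct (Nat.Even_or_Odd r) as [[q ->] | [q ->]].
  - replace ((2 * q + 1) / 2)%nat with q by (symmetry; apply double_succ_div_2).
    rewrite double_div_2. apply Hq.
  - replace ((2 * q + 1 + 1) / 2)%nat with (S q)
      by (replace (2 * q + 1 + 1)%nat with (2 * S q)%nat by lia; symmetry; apply double_div_2).
    rewrite double_succ_div_2. apply Hq.
Qed.

Lemma sin_cos_INR_PI (p : nat) : sin (INR p * PI) = 0 /\ cos (INR p * PI) = (-1) ^ p.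
Proof.
  induction p as [|p [Hs Hc]]; [rewrite Rmult_0_l, sin_0, cos_0; split; reflexivity|].
  rewrite S_INR, Rmult_plus_distr_r, Rmult_1_l, neg_sin, neg_cos, Hs, Hc. cbn [pow]. lra.
Qed.

Lemma sin_even_mul_PI2 (p : nat) : sin (INR (2 * p) * (PI / 2)) = 0.
Proof.
  replace (INR (2 * p) * (PI / 2)) with (INR p * PI) by (rewrite mult_INR; simpl; field).
  apply sin_cos_INR_PI.
Qed.

Lemma sin_odd_mul_PI2 (p : nat) : sin (INR (2 * p + 1) * (PI / 2)) = (-1) ^ p.
Proof.
  replace (INR (2 * p + 1) * (PI / 2)) with (INR p * PI + PI / 2)
    by (rewrite plus_INR, mult_INR; simpl; field).
  rewrite sin_plus, sin_PI2, cos_PI2, (proj2 (sin_cos_INR_PI p)). ring.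
Qed.

Definition cos_moment_prim (a : R) (r : nat) (ph t : R) : R :=
  sum_n (fun j => INR (fact r) / INR (fact (r - j)) * t ^ (r - j)
                  * sin (a * t + ph + INR j * (PI / 2)) / a ^ (j + 1)) r.

Lemma cos_moment_prim_O (a ph t : R) : a <> 0 ->
  cos_moment_prim a 0 ph t = sin (a * t + ph) / a.
Proof.
  intros Ha. unfold cos_moment_prim. rewrite sum_O. cbn -[sin PI].
  rewrite Rmult_0_l, Rplus_0_r. field. exact Ha.
Qed.

Lemma cos_moment_prim_S (a : R) (r : nat) (ph t : R) : a <> 0 ->
  cos_moment_prim a (S r) ph t
  = t ^ S r * sin (a * t + ph) / a + INR (S r) / a * cos_moment_prim a r (ph + PI / 2) t.
Proof.
  intros Ha. unfold cos_moment_prim, sum_n.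
  rewrite sum_Sn_m by lia. rewrite <- sum_n_m_S, <- (sum_n_m_mult_l (INR (S r) / a)).
  apply (f_equal2 Rplus).
  - rewrite Nat.sub_0_r, Rmult_0_l, Rplus_0_r, Nat.add_0_l, pow_1.
    field. split; [exact Ha | apply INR_fact_neq_0].
  - apply sum_n_m_ext_R. intros j _. change (mult ?x ?y) with (x * y).
    replace (S r - S j)%nat with (r - j)%nat by lia.
    replace (a * t + ph + INR (S j) * (PI / 2)) with (a * t + (ph + PI / 2) + INR j * (PI / 2))
      by (rewrite S_INR; ring).
    rewrite fact_simpl, mult_INR, Nat.add_succ_l. cbn [pow].
    field. repeat split; try apply pow_nonzero; try apply INR_fact_neq_0; auto.
Qed.

Lemma is_derive_cos_moment_prim (a : R) (r : nat) : a <> 0 -> forall ph t,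
  is_derive (cos_moment_prim a r ph) t (t ^ r * cos (a * t + ph)).
Proof.
  intros Ha. induction r as [|r IH]; intros ph t.
  - apply (is_derive_ext (fun t => sin (a * t + ph) / a)).
    { intros s. symmetry. apply cos_moment_prim_O, Ha. }
    auto_derive; [exact I | field; exact Ha].
  - apply (is_derive_ext (fun t => t ^ S r * sin (a * t + ph) / a
                                   + INR (S r) / a * cos_moment_prim a r (ph + PI / 2) t)).
    { intros s. symmetry. apply cos_moment_prim_S, Ha. }
    replace (t ^ S r * cos (a * t + ph))
      with ((INR (S r) * t ^ r * sin (a * t + ph) / a + t ^ S r * cos (a * t + ph))
            + INR (S r) / a * (t ^ r * cos (a * t + (ph + PI / 2)))).
    + apply (is_derive_plus (fun t => t ^ S r * sin (a * t + ph) / a)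
                             (fun t => INR (S r) / a * cos_moment_prim a r (ph + PI / 2) t));
        [|apply is_derive_scal, IH].
      auto_derive; [exact I|].
      change (match r with 0%nat => 1 | S _ => INR r + 1 end) with (INR (S r)).
      cbn [pow]. field. exact Ha.
    + replace (a * t + (ph + PI / 2)) with (a * t + ph + PI / 2) by ring.
      rewrite (cos_plus (a * t + ph)), cos_PI2, sin_PI2. field. exact Ha.
Qed.

Lemma cos_moment_prim_at_0 (a : R) (r : nat) (ph : R) : a <> 0 ->
  cos_moment_prim a r ph 0 = INR (fact r) * sin (ph + INR r * (PI / 2)) / a ^ (r + 1).
Proof.
  intros Ha. revert ph. induction r as [|r IH]; intros ph.
  - rewrite cos_moment_prim_O by exact Ha. cbn -[sin PI].
    rewrite !Rmult_0_r, !Rmult_0_l, Rplus_0_l, Rplus_0_r. field. exact Ha.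
  - rewrite cos_moment_prim_S, IH by exact Ha.
    replace (ph + PI / 2 + INR r * (PI / 2)) with (ph + INR (S r) * (PI / 2))
      by (rewrite S_INR; ring).
    rewrite fact_simpl, mult_INR, Nat.add_succ_l. cbn [pow].
    field. split; [apply pow_nonzero|]; exact Ha.
Qed.

Lemma RInt_pow_cos (a : R) (r : nat) (b : R) : a <> 0 ->
  RInt (fun t => t ^ r * cos (a * t)) 0 b = cos_moment_prim a r 0 b - cos_moment_prim a r 0 0.
Proof.
  intros Ha. apply is_RInt_unique.
  apply (is_RInt_ext (fun t => t ^ r * cos (a * t + 0))).
  { intros t _. rewrite Rplus_0_r. reflexivity. }
  apply (is_RInt_derive (cos_moment_prim a r 0)).
  - intros t _. apply is_derive_cos_moment_prim, Ha.
  - intros t _. apply (@ex_derive_continuous R_AbsRing R_NormedModule). auto_derive. exact I.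
Qed.

Definition moment_coef (r j : nat) : R :=
  INR (fact r) / INR (fact (r - j)) * (PI / 2) ^ (r - j).

Definition sin_phase_term (j n : nat) : R :=
  (-1) ^ n * sin (INR (n + 1 + j) * (PI / 2)) / (INR n + 1) ^ (j + 2).

Lemma alt_cos_moment_expansion (r n : nat) :
  (-1) ^ n / (INR n + 1) * RInt (fun t => t ^ r * cos ((INR n + 1) * t)) 0 (PI / 2)
  = sum_n (fun j => moment_coef r j * sin_phase_term j n) r
    - INR (fact r) * sin (INR r * PI / 2) * ((-1) ^ n / (INR n + 1) ^ (r + 2)).
Proof.
  set (a := INR n + 1).
  assert (Ha : a <> 0) by (unfold a; pose proof (pos_INR n); lra).
  rewrite RInt_pow_cos, cos_moment_prim_at_0 by exact Ha.
  unfold cos_moment_prim, sum_n.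
  rewrite Rmult_minus_distr_l, <- sum_n_m_Rmult_l. f_equal.
  - apply sum_n_m_ext_R. intros j _. unfold moment_coef, sin_phase_term.
    replace (a * (PI / 2) + 0 + INR j * (PI / 2)) with (INR (n + 1 + j) * (PI / 2))
      by (unfold a; rewrite !plus_INR; simpl; ring).
    replace (j + 2)%nat with (S (j + 1)) by lia. cbn [pow]. fold a.
    field. repeat split; try apply pow_nonzero; try apply INR_fact_neq_0; exact Ha.
  - replace (0 + INR r * (PI / 2)) with (INR r * PI / 2) by field.
    replace (r + 2)%nat with (S (r + 1)) by lia. cbn [pow].
    field. split; [apply pow_nonzero|]; exact Ha.
Qed.

Definition sin_phase_sum (j : nat) : R :=
  if Nat.even j then (-1) ^ (j / 2) * dbeta (INR (j + 2))
  else (-1) ^ (j / 2) / 2 ^ (j + 2) * zetaE (INR (j + 2)).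

Lemma is_series_sin_phase_even (k : nat) :
  is_series (sin_phase_term (2 * k)) ((-1) ^ k * dbeta (INR (2 * k + 2))).
Proof.
  apply (is_series_even_spread
           (fun m => (-1) ^ k * ((-1) ^ m / (2 * INR m + 1) ^ (2 * k + 2)))).
  - intros m. unfold sin_phase_term.
    replace (2 * m + 1 + 2 * k)%nat with (2 * (m + k) + 1)%nat by lia.
    replace (INR (2 * m)) with (2 * INR m) by (rewrite mult_INR; simpl; ring).
    rewrite sin_odd_mul_PI2, pow_1_even, pow_add.
    field. apply pow_nonzero. pose proof (pos_INR m). lra.
  - intros m. unfold sin_phase_term.
    replace (2 * m + 1 + 1 + 2 * k)%nat with (2 * (m + k + 1))%nat by lia.
    rewrite sin_even_mul_PI2. unfold Rdiv. ring.
  - apply is_series_Rmult_l, is_series_dbeta. lia.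
Qed.

Lemma is_series_sin_phase_odd (k : nat) :
  is_series (sin_phase_term (2 * k + 1))
            ((-1) ^ k / 2 ^ (2 * k + 3) * zetaE (INR (2 * k + 3))).
Proof.
  apply (is_series_odd_spread
           (fun m => (-1) ^ k / 2 ^ (2 * k + 3) * ((-1) ^ m / (INR m + 1) ^ (2 * k + 3)))).
  - intros m. unfold sin_phase_term.
    replace (2 * m + 1 + (2 * k + 1))%nat with (2 * (m + k + 1))%nat by lia.
    rewrite sin_even_mul_PI2. unfold Rdiv. ring.
  - intros m. unfold sin_phase_term.
    replace (2 * m + 1 + 1 + (2 * k + 1))%nat with (2 * (m + k + 1) + 1)%nat by lia.
    replace (2 * m + 1)%nat with (S (2 * m)) by lia.
    replace (2 * k + 1 + 2)%nat with (2 * k + 3)%nat by lia.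
    replace (INR (S (2 * m)) + 1) with (2 * (INR m + 1))
      by (rewrite S_INR, mult_INR; simpl; ring).
    rewrite sin_odd_mul_PI2, pow_1_odd, !pow_add.
    rewrite Rpow_mult_distr. pose proof (pos_INR m).
    field. repeat split; try apply pow_nonzero; lra.
  - apply is_series_Rmult_l, is_series_zetaE. lia.
Qed.

Lemma is_series_sin_phase (j : nat) : is_series (sin_phase_term j) (sin_phase_sum j).
Proof.
  unfold sin_phase_sum. destruct (Nat.Even_or_Odd j) as [[k ->] | [k ->]].
  - rewrite Nat.even_even, double_div_2. apply is_series_sin_phase_even.
  - rewrite Nat.even_odd, double_succ_div_2.
    replace (2 * k + 1 + 2)%nat with (2 * k + 3)%nat by lia.
    apply is_series_sin_phase_odd.
Qed.

Lemma sum_moment_sin_phase (r : nat) :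
  sum_n (fun j => moment_coef r j * sin_phase_sum j) r
  = sum_n_m (fun k : nat =>
        (-1) ^ k * INR (fact (2 * k)%nat) * Binomial.C r (2 * k)%nat
        * (PI / 2) ^ (r - 2 * k)%nat * dbeta (INR (2 * k + 2)%nat))
       0 (r / 2)%nat
    + sum_n_m (fun k : nat =>
        (-1) ^ (k - 1)%nat * INR (fact (2 * k - 1)%nat) / 2 ^ (2 * k + 1)%nat
        * Binomial.C r (2 * k - 1)%nat
        * (PI / 2) ^ (r + 1 - 2 * k)%nat * zetaE (INR (2 * k + 1)%nat))
       1 ((r + 1) / 2)%nat.
Proof.
  rewrite sum_n_parity_split. f_equal; apply sum_n_m_ext_R; intros k Hk;
    unfold moment_coef, sin_phase_sum, Binomial.C.
  - rewrite Nat.even_even, double_div_2. field. split; apply INR_fact_neq_0.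
  - destruct k as [|k]; [lia|].
    replace (2 * S k - 1)%nat with (2 * k + 1)%nat by lia.
    replace (r + 1 - 2 * S k)%nat with (r - (2 * k + 1))%nat by lia.
    replace (2 * S k + 1)%nat with (2 * k + 1 + 2)%nat by lia.
    rewrite Nat.even_odd, double_succ_div_2, Nat.sub_succ, Nat.sub_0_r.
    field. repeat split; try apply INR_fact_neq_0; apply pow_nonzero; lra.
Qed.

Theorem lemma4p2 (r : nat) :
  is_series
    (fun n : nat =>
       (-1) ^ n / (INR n + 1) *
       RInt (fun t => t ^ r * cos ((INR n + 1) * t)) 0 (PI / 2))
    (sum_n_m (fun k : nat =>
        (-1) ^ k * INR (fact (2 * k)%nat) * Binomial.C r (2 * k)%nat
        * (PI / 2) ^ (r - 2 * k)%nat * dbeta (INR (2 * k + 2)%nat))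
       0 (r / 2)%nat
     + sum_n_m (fun k : nat =>
        (-1) ^ (k - 1)%nat * INR (fact (2 * k - 1)%nat) / 2 ^ (2 * k + 1)%nat
        * Binomial.C r (2 * k - 1)%nat
        * (PI / 2) ^ (r + 1 - 2 * k)%nat * zetaE (INR (2 * k + 1)%nat))
       1 ((r + 1) / 2)%nat
     - INR (fact r) * sin (INR r * PI / 2) * zetaE (INR (r + 2)%nat)).
Proof.
  rewrite <- sum_moment_sin_phase.
  apply (is_series_ext (fun n => sum_n (fun j => moment_coef r j * sin_phase_term j n) r
           - INR (fact r) * sin (INR r * PI / 2) * ((-1) ^ n / (INR n + 1) ^ (r + 2)))).
  { intros n. symmetry. apply alt_cos_moment_expansion. }
  apply (is_series_minus (fun n => sum_n (fun j => moment_coef r j * sin_phase_term j n) r)).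
  - apply (is_series_sum_n (fun j n => moment_coef r j * sin_phase_term j n)).
    intros j. apply is_series_Rmult_l, is_series_sin_phase.
  - apply is_series_Rmult_l, is_series_zetaE. lia.
Qed.
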